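(* Let $S$ be an $a$-cap free configuration. Then a slope labeling of $S$ exists. In particular, for every edge $e$ of $S$ let $c(e)$ be the maximum size of a cap starting with the edge $e$; then the function $e \mapsto c(e)-1$ is a slope labeling of $S$.
   Context: A configuration is a finite set $S$ of points with a linear order $<$ and, for every $3$-element subset, an arbitrary assignment declaring it either a cap or a cup. Points $x_1<\cdots<x_a$ form an $a$-cup (resp. $a$-cap) if every consecutive triple $\{x_{i-1},x_i,x_{i+1}\}$, $1<i<a$, is assigned cup (resp. cap); $1$- and $2$-element sets are both caps and cups. $S$ is $a$-cap free if it contains no $a$-cap. An edge is a pair $x<y$ of points, written $xy$; a cap $x_1x_2\cdots x_a$ with $a \ge 2$ starts with the edge $x_1x_2$. A slope labeling of an $a$-cap free configuration $S$ is an assignment of an integer $s(xy) \in \{1, 2, \dots, a-2\}$ to every edge $xy$ of $S$ such that for any points $x<y<z$ in $S$, $s(xy) \leq s(yz)$ implies that $\{x,y,z\}$ is a $3$-cup. *)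

From mathcomp Require Import all_boot all_order.
Set Implicit Arguments. Unset Strict Implicit. Unset Printing Implicit Defensive.

(* A configuration with n points: the points are 'I_n with the natural linear
   order, and [cupb x y z] (meaningful for x < y < z) is true iff the triple
   {x,y,z} is declared a cup (false = it is declared a cap). *)
Section Config.
Variables (n : nat) (cupb : 'I_n -> 'I_n -> 'I_n -> bool).

Fixpoint consec_caps (s : seq 'I_n) : bool :=
  match s with
  | x :: ((y :: z :: _) as t) => ~~ cupb x y z && consec_caps t
  | _ => true
  end.

Definition is_cap (s : seq 'I_n) : bool :=
  sorted (fun u v : 'I_n => u < v) s && consec_caps s.

Definition cap_free (a : nat) : Prop :=
  ~ (exists s : seq 'I_n, is_cap s /\ size s = a).

(* maximum size of a cap starting with the edge xy (caps have size <= n) *)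
Definition max_cap_from (x y : 'I_n) : nat :=
  \max_(k < n.+1 | [exists t : k.-tuple 'I_n,
                      is_cap t && (take 2 t == [:: x; y])]) k.

Definition slope_labeling (a : nat) (s : 'I_n -> 'I_n -> nat) : Prop :=
  (forall x y : 'I_n, x < y -> 1 <= s x y <= a - 2) /\
  (forall x y z : 'I_n, x < y -> y < z -> s x y <= s y z -> cupb x y z).

End Config.

From mathcomp Require Import all_boot all_order.
From mathcomp Require Import zify.
Set Implicit Arguments.
Unset Strict Implicit.
Unset Printing Implicit Defensive.

(* Write c(x y) for [max_cap_from cupb x y].  If x y z is a cap, then x can be
   prepended to every cap starting with the edge y z, so c(x y) >= c(y z) + 1;
   contrapositively c(x y) - 1 <= c(y z) - 1 forces x y z to be a cup.  The
   bounds 2 <= c <= a - 1 hold because x y is itself a 2-cap and a longer cap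
   would contain an a-cap. *)

Section MaxCap.
Variables (n : nat) (cupb : 'I_n -> 'I_n -> 'I_n -> bool).

Lemma consec_caps_take k s : consec_caps cupb s -> consec_caps cupb (take k s).
Proof.
elim: s k => [|x [|y [|z t]] IH] [|[|[|k]]] //= /andP[xyz_cap yzt].
by rewrite xyz_cap; exact: (IH k.+2 yzt).
Qed.

Lemma is_cap_take k s : is_cap cupb s -> is_cap cupb (take k s).
Proof. by case/andP=> s_sorted s_caps; rewrite /is_cap take_sorted ?consec_caps_take. Qed.

Lemma is_cap_edge (x y : 'I_n) : x < y -> is_cap cupb [:: x; y].
Proof. by rewrite /is_cap /= andbT => ->. Qed.

Lemma is_cap_cons (x y z : 'I_n) u :
  x < y -> ~~ cupb x y z -> is_cap cupb [:: y, z & u] -> is_cap cupb [:: x, y, z & u].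
Proof. by rewrite /is_cap /= => -> -> /andP[-> ->]. Qed.

Lemma size_cap s : is_cap cupb s -> size s <= n.
Proof.
case/andP=> s_sorted _.
have s_uniq : uniq s.
  apply: (sorted_uniq (leT := fun u v : 'I_n => u < v)) s_sorted.
  - by move=> y x z; apply: ltn_trans.
  - by move=> x; rewrite /= ltnn.
by rewrite -(card_uniqP s_uniq) (leq_trans (max_card _)) ?card_ord.
Qed.

Lemma size_cap_lt a s : cap_free cupb a -> is_cap cupb s -> size s < a.
Proof.
move=> free s_cap; rewrite ltnNge; apply/negP=> a_le_s.
by apply: free; exists (take a s); rewrite is_cap_take // size_takel.
Qed.

Lemma cap_tupleP x y k :
  reflect (exists2 s, size s = k & is_cap cupb s && (take 2 s == [:: x; y]))
          [exists t : k.-tuple 'I_n, is_cap cupb t && (take 2 t == [:: x; y])].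
Proof.
apply: (iffP existsP) => [[t st] | [s /eqP size_s st]].
  by exists (tval t); rewrite ?size_tuple.
by exists (Tuple size_s).
Qed.

Lemma max_cap_from_ge x y s :
  is_cap cupb s -> take 2 s = [:: x; y] -> size s <= max_cap_from cupb x y.
Proof.
move=> s_cap s_edge; have s_lt : size s < n.+1 by rewrite ltnS size_cap.
apply: (leq_bigmax_cond (F := fun k : 'I_n.+1 => nat_of_ord k) (Ordinal s_lt)).
by apply/cap_tupleP; exists s; rewrite ?s_cap ?s_edge /=.
Qed.

Lemma max_cap_from_le x y m :
  (forall s, is_cap cupb s -> take 2 s = [:: x; y] -> size s <= m) ->
  max_cap_from cupb x y <= m.
Proof.
move=> bound; apply/bigmax_leqP => k /cap_tupleP[s <- /andP[s_cap /eqP s_edge]].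
exact: bound.
Qed.

Lemma max_cap_from_edge (x y : 'I_n) : x < y -> 2 <= max_cap_from cupb x y.
Proof. by move=> xy; apply: (max_cap_from_ge (s := [:: x; y])); rewrite ?is_cap_edge. Qed.

Lemma max_cap_from_lt a x y : cap_free cupb a -> max_cap_from cupb x y < a.
Proof.
move=> free; have a_gt0 : 0 < a by apply: (size_cap_lt (s := [::])).
rewrite -(prednK a_gt0) ltnS; apply: max_cap_from_le => s s_cap _.
by rewrite -ltnS prednK // (size_cap_lt free).
Qed.

Lemma max_cap_from_prepend (x y z : 'I_n) :
  x < y -> y < z -> ~~ cupb x y z ->
  max_cap_from cupb y z < max_cap_from cupb x y.
Proof.
move=> xy yz xyz_cap; have yz_ge2 := max_cap_from_edge yz.
suff : max_cap_from cupb y z <= (max_cap_from cupb x y).-1 by lia.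
apply: max_cap_from_le => -[|y' [|z' u]] //= s_cap [eq_y eq_z _]; subst y' z'.
by have /= := max_cap_from_ge (is_cap_cons xy xyz_cap s_cap) (erefl : _ = [:: x; y]); lia.
Qed.

End MaxCap.

Theorem theorem3p2 (n a : nat) (cupb : 'I_n -> 'I_n -> 'I_n -> bool)
  (Hfree : cap_free cupb a) :
  (exists s : 'I_n -> 'I_n -> nat, slope_labeling cupb a s) /\
  slope_labeling cupb a (fun x y => max_cap_from cupb x y - 1).
Proof.
suff labeling : slope_labeling cupb a (fun x y => max_cap_from cupb x y - 1).
  by split; first exists (fun x y => max_cap_from cupb x y - 1).
split=> [x y xy | x y z xy yz].
  have := max_cap_from_edge cupb xy; have := max_cap_from_lt x y Hfree; lia.
apply: contraTT => xyz_cap; have := max_cap_from_prepend xy yz xyz_cap.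
have := max_cap_from_edge cupb yz; lia.
Qed.
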